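(* Let $A$ be a setoid and $B$ a setoid family over $A$, with underlying types $A_0$ and $B_0\,a$. The type family $\approx^B:\mathsf W(A_0,B_0)\to\mathsf W(A_0,B_0)\to\mathsf U$ is a partial equivalence relation, i.e. the following types are inhabited: \[ \prod_{w,w'}\approx^B w\,w'\to\ \approx^B w'\,w,\qquad \prod_{w,w',w''}\approx^B w\,w'\to\ \approx^B w'\,w''\to\ \approx^B w\,w''. \]
   Context: Setting: intensional Martin-Löf type theory with $\Pi$-types and a universe $\mathsf U$ closed under $\Pi$ and containing intensional $\Sigma$-types, identity types, unit type, W-types and dependent W-types; propositions-as-types. For $A_0:\mathsf U$, $B_0:A_0\to\mathsf U$, $\mathsf W(A_0,B_0)$ is the W-type with constructor $\mathsf{sup}\,a\,f$ ($f:B_0a\to\mathsf W(A_0,B_0)$), usual eliminator, and node/branch functions $\mathsf n(\mathsf{sup}\,a\,f)\equiv a$, $\mathsf b(\mathsf{sup}\,a\,f)\equiv f$. For $I:\mathsf U$, $X:I\to\mathsf U$, $Y:\prod_iX\,i\to\mathsf U$, $d:\prod_i\prod_xY\,i\,x\to I$, the dependent W-type $\mathsf{DW}_{I,X,Y,d}:I\to\mathsf U$ is the inductive family with constructor $\mathsf{dsup}\,i\,x\,f:\mathsf{DW}\,i$ for $f:\prod_{y:Y\,i\,x}\mathsf{DW}(d\,i\,x\,y)$ and the usual dependent eliminator. A setoid $A$ is a type $A_0$ with a relation $\approx_A:A_0\to A_0\to\mathsf U$ and terms witnessing reflexivity, symmetry, transitivity. A setoid family $B$ over $A$ assigns to $a:A_0$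 a setoid $B\,a$ (underlying type $B_0\,a$) and to $\alpha:a\approx_Aa'$ an extensional (equality-preserving) function $B_\alpha:B\,a\to B\,a'$, functorial up to setoid equality and with $B_\alpha,B_{\alpha'}$ pointwise equal for any $\alpha,\alpha':a\approx_Aa'$. Write $b\approx_\alpha b'$ for $B_\alpha b\approx_{B\,a'}b'$. Definition: $\approx^Bw\,w':=\mathsf{DW}_{I,X,Y,d}(w,w')$ where $I:=\mathsf W(A_0,B_0)\times\mathsf W(A_0,B_0)$, $X(w,w'):=\mathsf n\,w\approx_A\mathsf n\,w'$, $Y(w,w')\,\alpha:=\sum_{b:B_0(\mathsf nw)}\sum_{b':B_0(\mathsf nw')}b\approx_\alpha b'$, and $d\,(w,w')\,\alpha\,(b,b',\beta):=(\mathsf b\,w\,b,\mathsf b\,w'\,b')$. *)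

Inductive W (A0 : Type) (B0 : A0 -> Type) : Type :=
  | sup : forall a : A0, (B0 a -> W A0 B0) -> W A0 B0.
Arguments sup {A0 B0} a f.

Definition node {A0 : Type} {B0 : A0 -> Type} (w : W A0 B0) : A0 :=
  match w with sup a _ => a end.
Definition branch {A0 : Type} {B0 : A0 -> Type} (w : W A0 B0) : B0 (node w) -> W A0 B0 :=
  match w with sup _ f => f end.

Inductive DW (I : Type) (X : I -> Type) (Y : forall i, X i -> Type)
    (d : forall i (x : X i), Y i x -> I) : I -> Type :=
  | dsup : forall (i : I) (x : X i), (forall y : Y i x, DW I X Y d (d i x y)) -> DW I X Y d i.
Arguments dsup {I X Y d} i x f.

Record Setoid : Type := {
  carrier :> Type;
  eqv : carrier -> carrier -> Type;
  eqv_refl : forall x, eqv x x;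
  eqv_sym : forall x y, eqv x y -> eqv y x;
  eqv_trans : forall x y z, eqv x y -> eqv y z -> eqv x z
}.
Arguments eqv {s} x y.
Arguments eqv_refl {s} x.
Arguments eqv_sym {s x y} _.
Arguments eqv_trans {s x y z} _ _.

Record SetoidFamily (A : Setoid) : Type := {
  fam :> carrier A -> Setoid;
  transp : forall a a' : carrier A, eqv a a' -> fam a -> fam a';
  transp_ext : forall a a' (al : eqv a a') (b b' : fam a),
      eqv b b' -> eqv (transp a a' al b) (transp a a' al b');
  transp_refl : forall a (b : fam a), eqv (transp a a (eqv_refl a) b) b;
  transp_comp : forall a a' a'' (al : eqv a a') (be : eqv a' a'') (b : fam a),
      eqv (transp a a'' (eqv_trans al be) b) (transp a' a'' be (transp a a' al b));
  transp_irr : forall a a' (al al' : eqv a a') (b : fam a),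
      eqv (transp a a' al b) (transp a a' al' b)
}.
Arguments fam {A} s a.
Arguments transp {A} s {a a'} al b.

Definition B0of {A : Setoid} (B : SetoidFamily A) : carrier A -> Type :=
  fun a => carrier (fam B a).

Definition eqv_over {A : Setoid} (B : SetoidFamily A) {a a' : carrier A}
    (al : eqv a a') (b : B0of B a) (b' : B0of B a') : Type :=
  eqv (s := fam B a') (transp B al b) b'.

Definition WB {A : Setoid} (B : SetoidFamily A) : Type := W (carrier A) (B0of B).

Definition WI {A : Setoid} (B : SetoidFamily A) : Type := (WB B * WB B)%type.

Definition WX {A : Setoid} (B : SetoidFamily A) (p : WI B) : Type :=
  eqv (s := A) (node (fst p)) (node (snd p)).

Definition WY {A : Setoid} (B : SetoidFamily A) (p : WI B) (al : WX B p) : Type :=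
  { b : B0of B (node (fst p)) & { b' : B0of B (node (snd p)) & eqv_over B al b b' } }.

Definition Wd {A : Setoid} (B : SetoidFamily A) (p : WI B) (al : WX B p)
    (t : WY B p al) : WI B :=
  (branch (fst p) (projT1 t), branch (snd p) (projT1 (projT2 t))).

Definition Weqv {A : Setoid} (B : SetoidFamily A) (w w' : WB B) : Type :=
  DW (WI B) (WX B) (WY B) (Wd B) (w, w').


(* By induction on the first derivation: a derivation of [w ≈ w'] is a node
   equality [α] with derivations for all pairs of branches [b ≈_α b'].
   Reversing or composing derivations only requires moving [b ≈_α b'] to a
   relation over [α⁻¹], resp. over the second leg of [α ; α'], which the
   functoriality and proof-irrelevance laws of the setoid family provide. *)

Section Weqv.

Variables (A : Setoid) (B : SetoidFamily A).

Lemma eqv_over_sym (a a' : carrier A) (al : eqv a a') (al' : eqv a' a)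
    (b : B0of B a) (b' : B0of B a') :
  eqv_over B al' b' b -> eqv_over B al b b'.
Proof.
  unfold eqv_over; intros be'.
  eapply eqv_trans; [apply transp_ext, eqv_sym, be'|].
  eapply eqv_trans; [apply eqv_sym, transp_comp|].
  eapply eqv_trans; [apply (transp_irr A B _ _ _ (eqv_refl a'))|].
  apply transp_refl.
Qed.

Lemma eqv_over_transp_l (a a' a'' : carrier A) (al : eqv a a') (al' : eqv a' a'')
    (al'' : eqv a a'') (b : B0of B a) (b'' : B0of B a'') :
  eqv_over B al'' b b'' -> eqv_over B al' (transp B al b) b''.
Proof.
  unfold eqv_over; intros be.
  eapply eqv_trans; [apply eqv_sym, transp_comp|].
  eapply eqv_trans; [apply transp_irr|].
  exact be.
Qed.

Lemma Weqv_sym_at (p : WI B) :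
  DW (WI B) (WX B) (WY B) (Wd B) p -> Weqv B (snd p) (fst p).
Proof.
  intros h; induction h as [[w w'] al f IH]; cbn in *.
  apply (dsup (w', w) (eqv_sym al)); intros [b' [b be]]; cbn in *.
  exact (IH (existT _ b (existT _ b' (eqv_over_sym _ _ al _ _ _ be)))).
Qed.

Lemma Weqv_trans_at (p q : WI B) :
  DW (WI B) (WX B) (WY B) (Wd B) p -> DW (WI B) (WX B) (WY B) (Wd B) q ->
  snd p = fst q -> Weqv B (fst p) (snd q).
Proof.
  intros h; revert q; induction h as [[w w'] al f IH].
  intros q [[v w''] al' g] e; cbn in *; subst v.
  apply (dsup (w, w'') (eqv_trans al al')); intros [b [b'' be]]; cbn in *.
  (* the middle branch is the one indexed by the transport of [b] along [al] *)
  pose (b' := transp B al b).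
  exact (IH (existT _ b (existT _ b' (eqv_refl b' : eqv_over B al b b'))) _
            (g (existT _ b' (existT _ b'' (eqv_over_transp_l _ _ _ al al' _ _ _ be))))
            eq_refl).
Qed.

End Weqv.

Theorem proposition3p2 (A : Setoid) (B : SetoidFamily A) :
  ((forall w w' : WB B, Weqv B w w' -> Weqv B w' w) *
   (forall w w' w'' : WB B, Weqv B w w' -> Weqv B w' w'' -> Weqv B w w''))%type.
Proof.
  split.
  - intros w w'; exact (Weqv_sym_at A B (w, w')).
  - intros w w' w'' h h'; exact (Weqv_trans_at A B (w, w') (w', w'') h h' eq_refl).
Qed.
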